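(* Let $\mathbb{P}=\varprojlim\langle\{P_n\},\{p^n_k\}_{k<n}\rangle$ where $\langle\{P_n\},\{p^n_k\}\rangle$ is a Fraïssé sequence in the category of finite posets with quotient maps. Let $A,B$ be finite posets (discrete topology), $f:\mathbb{P}\to A$ a continuous quotient map and $g:B\to A$ a quotient map. Then there is a continuous quotient map $h:\mathbb{P}\to B$ with $g\circ h=f$.
   Context: A quotient map between posets is a surjective order-preserving map $\phi:A\to B$ such that for all $p\le r$ in $B$ there are $x\le y$ in $A$ with $\phi(x)=p,\phi(y)=r$. The inverse limit of nonempty finite posets $P_n$ with quotient maps $p^m_k:P_m\to P_k$ ($k<m$, $p^k_l\circ p^m_k=p^m_l$) is $\{(x_n)\in\prod_nP_n:p^{n+1}_n(x_{n+1})=x_n\ \forall n\}$, ordered coordinatewise, with the subspace topology of the product of discrete spaces. The sequence is a Fraïssé sequence if (U) for every finite poset $X$ there are $n$ and a quotient map $P_n\to X$, and (A) for every $k$, every finite poset $Y$ and quotient map $f:Y\to P_k$ there exist $\ell>k$ and a quotient map $g:P_\ell\to Y$ with $f\circ g=p^\ell_k$. *)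

From mathcomp Require Import all_boot.
Unset Strict Implicit. Unset Printing Implicit Defensive.

Record finPoset := FinPoset {
  fp_car :> finType;
  fp_le : rel fp_car;
  fp_refl : forall x, fp_le x x;
  fp_antisym : forall x y, fp_le x y -> fp_le y x -> x = y;
  fp_trans : forall x y z, fp_le x y -> fp_le y z -> fp_le x z }.
Arguments fp_le {f} _ _.

(* Quotient map between (pre)ordered sets, with order relations given
   explicitly (used both for finite posets and for the inverse limit). *)
Definition quotient_map {A B : Type} (leA : A -> A -> Prop) (leB : B -> B -> Prop)
  (phi : A -> B) : Prop :=
  [/\ (forall b, exists a, phi a = b),
      (forall x y, leA x y -> leB (phi x) (phi y)) &
      (forall q r, leB q r -> exists x y, [/\ leA x y, phi x = q & phi y = r])].

Definition fquot {A B : finPoset} (phi : A -> B) : Prop :=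
  quotient_map (fun x y => @fp_le A x y) (fun x y => @fp_le B x y) phi.

(* An inverse sequence: p m k : P m -> P k (only meaningful for k < m). *)
Definition inverse_seq (P : nat -> finPoset) (p : forall m k, P m -> P k) : Prop :=
  (forall m k, k < m -> fquot (p m k : P m -> P k)) /\
  (forall l k m, l < k -> k < m -> forall x, p k l (p m k x) = p m l x).

Definition fraisse_seq (P : nat -> finPoset) (p : forall m k, P m -> P k) : Prop :=
  (forall X : finPoset, 0 < #|X| -> exists n (q : P n -> X), fquot q) /\
  (forall k (Y : finPoset) (f : Y -> P k), fquot f ->
     exists l (g : P l -> Y), [/\ k < l, fquot g & forall x, f (g x) = p l k x]).

Definition invlim (P : nat -> finPoset) (p : forall m k, P m -> P k) : Type :=
  {x : forall n, P n | forall n, p n.+1 n (x n.+1) = x n}.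

Definition invlim_le (P : nat -> finPoset) (p : forall m k, P m -> P k) (x y : invlim P p) : Prop :=
  forall n, @fp_le (P n) (sval x n) (sval y n).

(* Continuity of a map from the inverse limit (subspace of the product of
   discrete spaces) into a discrete space: each point has a basic open
   neighbourhood (fixing finitely many coordinates) on which the map is constant. *)
Definition invlim_continuous (P : nat -> finPoset) (p : forall m k, P m -> P k) {T : Type} (f : invlim P p -> T) : Prop :=
  forall x, exists N, forall y : invlim P p,
    (forall n, n <= N -> sval y n = sval x n) -> f y = f x.

(* By compactness of the inverse limit (Koenig's lemma), the continuous map f
   into the finite poset A depends only on one coordinate N, so f = f' o pi_N
   for a quotient map f' : P_N -> A.  Pulling g back along f' gives a finite
   poset D with a quotient map D -> P_N; the amalgamation property of the
   Fraisse sequence factors some bonding map p^l_N through it, and composing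
   P_l -> D -> B with the projection pi_l yields h. *)
From mathcomp Require Import all_boot.
From Stdlib Require Import Classical ClassicalEpsilon.

Lemma dependent_choice (Q : nat -> Type) (V : forall k, Q k -> Prop)
    (R : forall k, Q k.+1 -> Q k -> Prop) (q0 : Q 0) :
  V 0 q0 -> (forall k a, V k a -> exists b, V k.+1 b /\ R k b a) ->
  exists x : forall k, Q k, x 0 = q0 /\ forall k, V k (x k) /\ R k (x k.+1) (x k).
Proof.
move=> V0 HR.
have step k (a : {a : Q k | V k a}) : {b : {b : Q k.+1 | V k.+1 b} | R k (sval b) (sval a)}.
  have /constructive_indefinite_description [b [Vb Rb]] := HR k _ (svalP a).
  by exists (exist _ b Vb).
pose fix xs k : {a : Q k | V k a} :=
  if k is k'.+1 then sval (step k' (xs k')) else exist _ q0 V0.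
exists (fun k => sval (xs k)); split=> // k; split; first exact: svalP (xs k).
exact: svalP (step k (xs k)).
Qed.

Lemma fin_antitone_ex (X : finType) (Q : X -> nat -> Prop) :
  (forall a m m', m <= m' -> Q a m' -> Q a m) -> (forall m, exists a, Q a m) ->
  exists a, forall m, Q a m.
Proof.
move=> Qanti Qex; apply: NNPP => noQ.
have bound a : {m | ~ Q a m}.
  by apply/constructive_indefinite_description/not_all_ex_not => Qa; apply: noQ; exists a.
have [a Qa] := Qex (\max_b sval (bound b)).
by apply: (svalP (bound a)); apply: Qanti Qa; apply: leq_bigmax.
Qed.

Lemma thread_proj {Q : nat -> Type} {q : forall m k, Q m -> Q k}
    (q_comp : forall l k m, l < k -> k < m -> forall a, q k l (q m k a) = q m l a)
    {x : forall k, Q k} :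
  (forall k, q k.+1 k (x k.+1) = x k) -> forall n m, n < m -> q m n (x m) = x n.
Proof.
move=> xq n; elim=> // m IH; rewrite ltnS leq_eqVlt => /orP [/eqP <- | ltnm].
  exact: xq.
by rewrite -(q_comp n m m.+1) // xq IH.
Qed.

Lemma thread_through {Q : nat -> Type} {q : forall m k, Q m -> Q k}
    (q_comp : forall l k m, l < k -> k < m -> forall a, q k l (q m k a) = q m l a)
    (V : forall k, Q k -> Prop)
    (V_proj : forall m k a, k < m -> V m a -> V k (q m k a))
    (V_lift : forall k b, V k b -> exists a, V k.+1 a /\ q k.+1 k a = b)
    n (b : Q n) :
  V n b -> exists x : forall k, Q k,
    [/\ forall k, q k.+1 k (x k.+1) = x k, x n = b & forall k, V k (x k)].
Proof.
move=> Vb.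
have [z [z0 Vz]] := @dependent_choice (fun j => Q (j + n)) (fun j => V (j + n))
  (fun j a' a => q (j.+1 + n) (j + n) a' = a) b Vb (fun j => V_lift (j + n)).
have qz_comp l k m : l < k -> k < m -> forall a,
    q (k + n) (l + n) (q (m + n) (k + n) a) = q (m + n) (l + n) a.
  by move=> lk km a; rewrite q_comp // ltn_add2r.
have z_proj := @thread_proj (fun j => Q (j + n)) (fun m k => q (m + n) (k + n))
  qz_comp z (fun k => proj2 (Vz k)).
exists (fun k => q (k.+1 + n) k (z k.+1)); split.
- move=> k; rewrite q_comp ?ltnS ?leq_addr //.
  by rewrite -(q_comp k (k.+1 + n) (k.+2 + n)) ?ltnS ?leq_addr //; case: (Vz k.+1) => _ ->.
- by rewrite (z_proj 0 n.+1).
- by move=> k; apply: V_proj (proj1 (Vz k.+1)); rewrite ltnS leq_addr.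
Qed.

Section Koenig.
Variables (Q : nat -> finType) (q : forall m k, Q m -> Q k).
Hypothesis q_comp : forall l k m, l < k -> k < m -> forall a, q k l (q m k a) = q m l a.
Variable S : forall k, Q k -> Prop.
Hypothesis S_proj : forall m k a, k < m -> S m a -> S k (q m k a).
Hypothesis S_nonempty : forall k, exists a, S k a.

Let extendable n (a : Q n) := forall m, n < m -> exists2 c, S m c & q m n c = a.

Let extendable_ex n (T : Q n -> Prop) :
  (forall m, n < m -> exists2 c, S m c & T (q m n c)) -> exists2 a, T a & extendable n a.
Proof.
move=> HT.
have [a Ha] : exists a, forall m, T a /\ (n < m -> exists2 c, S m c & q m n c = a).
  apply: (@fin_antitone_ex _ (fun a m => T a /\ (n < m -> exists2 c, S m c & q m n c = a)))
    => [a m m' le_mm' [Ta ext] | m]; last first.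
    case: (ltnP n m) => [lt_nm | le_mn].
      by have [c Sc Tc] := HT m lt_nm; exists (q m n c); split=> // _; exists c.
    by have [c Sc Tc] := HT n.+1 (ltnSn n); exists (q n.+1 n c).
  split=> // lt_nm.
  move: le_mm'; rewrite leq_eqVlt => /orP [/eqP eq_mm' | lt_mm'].
    by subst m'; apply: ext.
  have [c Sc <-] := ext (ltn_trans lt_nm lt_mm').
  by exists (q m' m c); [apply: S_proj | rewrite q_comp].
by exists a => [|m]; [case: (Ha 0) | case: (Ha m)].
Qed.

Lemma koenig_thread : exists x : forall k, Q k,
  (forall k, q k.+1 k (x k.+1) = x k) /\ forall k, S k (x k).
Proof.
have [a0 _ ext_a0] : exists2 a : Q 0, True & extendable 0 a.
  by apply: extendable_ex => m _; have [c Sc] := S_nonempty m; exists c.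
have extend k (a : Q k) : extendable k a -> exists b, extendable k.+1 b /\ q k.+1 k b = a.
  move=> ext_a; have [b <- ext_b] : exists2 b : Q k.+1, q k.+1 k b = a & extendable k.+1 b.
    apply: extendable_ex => m lt_km; have [c Sc <-] := ext_a m (ltnW lt_km).
    by exists c; rewrite // q_comp.
  by exists b.
have [x [_ Hx]] := @dependent_choice Q extendable (fun k b a => q k.+1 k b = a) a0 ext_a0 extend.
exists x; split=> k; first by case: (Hx k).
have [c Sc <-] := proj1 (Hx k) k.+1 (ltnSn k); exact: S_proj.
Qed.

End Koenig.

Arguments koenig_thread {Q q} q_comp {S} S_proj S_nonempty.

Lemma quotient_map_comp {X Y Z : Type} {leX : X -> X -> Prop} {leY : Y -> Y -> Prop}
    {leZ : Z -> Z -> Prop} {phi : X -> Y} {psi : Y -> Z} :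
  quotient_map leX leY phi -> quotient_map leY leZ psi ->
  quotient_map leX leZ (psi \o phi).
Proof.
move=> [phi_surj phi_mono phi_lift] [psi_surj psi_mono psi_lift]; split=> /=.
- by move=> z; have [y <-] := psi_surj z; have [x <-] := phi_surj y; exists x.
- by move=> x x' /phi_mono /psi_mono.
- move=> z z' /psi_lift [y [y' [/phi_lift [x [x' [le_xx' <- <-]]] <- <-]]].
  by exists x, x'.
Qed.

Section InverseLimit.
Context {P : nat -> finPoset} {p : forall m k, P m -> P k}.
Hypothesis Hseq : inverse_seq P p.

Let p_comp : forall l k m, l < k -> k < m -> forall a, p k l (p m k a) = p m l a.
Proof. exact: proj2 Hseq. Qed.

Lemma invlim_proj (x : invlim P p) {n m} : n < m -> p m n (sval x m) = sval x n.
Proof. by apply: (thread_proj p_comp); case: x. Qed.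

Lemma invlim_eq_below (x y : invlim P p) N :
  sval x N = sval y N -> forall n, n <= N -> sval x n = sval y n.
Proof.
move=> xy n; rewrite leq_eqVlt => /orP [/eqP -> // | lt_nN].
by rewrite -(invlim_proj x lt_nN) -(invlim_proj y lt_nN) xy.
Qed.

Lemma invlim_lift_le {n} (a b : P n) : fp_le a b ->
  exists x y : invlim P p, [/\ invlim_le P p x y, sval x n = a & sval y n = b].
Proof.
move=> le_ab.
pose pp m k (z : P m * P m) := (p m k z.1, p m k z.2).
have pp_comp l k m : l < k -> k < m -> forall z, pp k l (pp m k z) = pp m l z.
  by move=> lk km [c d]; rewrite /pp /= !p_comp.
have pp_mono m k z : k < m -> fp_le z.1 z.2 -> fp_le (pp m k z).1 (pp m k z).2.
  by move=> km; case: (proj1 Hseq m k km) => _ p_mono _; apply: p_mono.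
have pp_lift k z : fp_le z.1 z.2 ->
    exists z', fp_le z'.1 z'.2 /\ pp k.+1 k z' = z.
  move=> le_z; case: (proj1 Hseq k.+1 k (ltnSn k)) => _ _ /(_ _ _ le_z) [c [d [le_cd ec ed]]].
  by exists (c, d); rewrite /pp /= ec ed; case: z {le_z ec ed}.
have [z [zq zn le_z]] :=
  @thread_through _ _ pp_comp (fun k z => fp_le z.1 z.2) pp_mono pp_lift n (a, b) le_ab.
have z1q k : p k.+1 k (z k.+1).1 = (z k).1 by rewrite -(zq k).
have z2q k : p k.+1 k (z k.+1).2 = (z k).2 by rewrite -(zq k).
by exists (exist _ _ z1q), (exist _ _ z2q); split; rewrite /= ?zn.
Qed.

Lemma invlim_proj_quot n :
  quotient_map (invlim_le P p) (fun a b => fp_le a b) (fun x : invlim P p => sval x n).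
Proof.
split.
- by move=> a; have [x [_ [_ <- _]]] := invlim_lift_le a a (fp_refl _ a); exists x.
- by move=> x y /(_ n).
- by move=> a b /(invlim_lift_le a b) [x [y [le_xy <- <-]]]; exists x, y.
Qed.

Lemma invlim_uniformly_continuous {T : Type} {f : invlim P p -> T} :
  invlim_continuous P p f ->
  exists N, forall x y : invlim P p, sval x N = sval y N -> f x = f y.
Proof.
move=> f_cont; apply: NNPP => not_unif.
pose bad n (a : P n) :=
  exists x y : invlim P p, [/\ sval x n = a, sval y n = a & f x <> f y].
have bad_proj m n a : n < m -> bad m a -> bad n (p m n a).
  move=> lt_nm [x [y [<- ya fxy]]]; exists x, y.
  by split=> //; [rewrite invlim_proj | rewrite -ya invlim_proj].
have bad_ex N : exists a, bad N a.
  apply: NNPP => no_bad; apply: not_unif; exists N => x y xy; apply: NNPP => fxy.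
  by apply: no_bad; exists (sval x N), x, y.
have [z [zq z_bad]] := koenig_thread p_comp bad_proj bad_ex.
have [N f_loc] := f_cont (exist _ z zq).
have [x [y [xN yN]]] := z_bad N; apply.
by rewrite !f_loc // => n /invlim_eq_below; [apply; rewrite yN | apply; rewrite xN].
Qed.

Lemma invlim_factor_quot {A : finPoset} {f : invlim P p -> A} :
  invlim_continuous P p f ->
  quotient_map (invlim_le P p) (fun a b => fp_le a b) f ->
  exists N (f' : P N -> A), fquot f' /\ forall x, f x = f' (sval x N).
Proof.
move=> f_cont [f_surj f_mono f_lift].
have [N f_unif] := invlim_uniformly_continuous f_cont.
have lift a : {x : invlim P p | sval x N = a}.
  apply: constructive_indefinite_description.
  by have [x [_ [_ <- _]]] := invlim_lift_le a a (fp_refl _ a); exists x.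
pose f' a := f (sval (lift a)).
have f_factor x : f x = f' (sval x N) by apply: f_unif; rewrite (svalP (lift _)).
exists N, f'; split=> //; split.
- by move=> b; have [x <-] := f_surj b; exists (sval x N); rewrite f_factor.
- move=> a b /(invlim_lift_le a b) [x [y [le_xy <- <-]]]; rewrite -!f_factor; exact: f_mono.
- move=> b b' /f_lift [x [y [le_xy <- <-]]].
  by exists (sval x N), (sval y N); rewrite -!f_factor.
Qed.

End InverseLimit.

Section Pullback.
Context {C B A : finPoset} (u : C -> A) (g : B -> A).

Definition pullback_car : finType := {cb : C * B | u cb.1 == g cb.2}.

Definition pullback_le : rel pullback_car :=
  fun s t => fp_le (val s).1 (val t).1 && fp_le (val s).2 (val t).2.

Lemma pullback_le_refl : reflexive pullback_le.
Proof. by move=> s; rewrite /pullback_le !fp_refl. Qed.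

Lemma pullback_le_anti s t : pullback_le s t -> pullback_le t s -> s = t.
Proof.
case/andP=> st1 st2 /andP [ts1 ts2]; apply: val_inj.
by case: (val s) (val t) st1 st2 ts1 ts2 => [c b] [c' b'] /= *; congr pair; exact: fp_antisym.
Qed.

Lemma pullback_le_trans s t r : pullback_le s t -> pullback_le t r -> pullback_le s r.
Proof.
case/andP=> st1 st2 /andP [tr1 tr2]; apply/andP.
by split; [exact: fp_trans st1 tr1 | exact: fp_trans st2 tr2].
Qed.

Definition pullback : finPoset :=
  @FinPoset pullback_car pullback_le pullback_le_refl pullback_le_anti
    (fun s t r => @pullback_le_trans s t r).

Definition pb_fst (s : pullback) : C := (val s).1.
Definition pb_snd (s : pullback) : B := (val s).2.

Definition pb_pair {c b} (e : u c = g b) : pullback := exist _ (c, b) (introT eqP e).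

Lemma pb_comm s : u (pb_fst s) = g (pb_snd s).
Proof. exact: eqP (valP s). Qed.

Lemma pb_fst_quot : {homo u : c c' / fp_le c c'} -> fquot g -> fquot pb_fst.
Proof.
move=> u_mono [g_surj _ g_lift]; split.
- by move=> c; have [b /esym e] := g_surj (u c); exists (pb_pair e).
- by move=> s t /andP [].
- move=> c c' le_cc'.
  have [b [b' [le_bb' /esym e /esym e']]] := g_lift _ _ (u_mono _ _ le_cc').
  by exists (pb_pair e), (pb_pair e'); split=> //; apply/andP.
Qed.

Lemma pb_snd_quot : fquot u -> {homo g : b b' / fp_le b b'} -> fquot pb_snd.
Proof.
move=> [u_surj _ u_lift] g_mono; split.
- by move=> b; have [c e] := u_surj (g b); exists (pb_pair e).
- by move=> s t /andP [].
- move=> b b' le_bb'.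
  have [c [c' [le_cc' e e']]] := u_lift _ _ (g_mono _ _ le_bb').
  by exists (pb_pair e), (pb_pair e'); split=> //; apply/andP.
Qed.

End Pullback.

Theorem mainTheorem8 (P : nat -> finPoset) (p : forall m k, P m -> P k)
  (HPne : forall n, 0 < #|P n|)
  (Hseq : inverse_seq P p) (Hfr : fraisse_seq P p)
  (A B : finPoset) (f : invlim P p -> A) (g : B -> A)
  (Hfc : invlim_continuous P p f)
  (Hfq : quotient_map (invlim_le P p) (fun a a' => fp_le a a') f)
  (Hgq : fquot g) :
  exists h : invlim P p -> B,
    [/\ invlim_continuous P p h,
        quotient_map (invlim_le P p) (fun b b' => fp_le b b') h &
        forall x, g (h x) = f x].
Proof.
have [N [f' [f'_quot f_factor]]] := invlim_factor_quot Hseq Hfc Hfq.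
have [[_ f'_mono _] [_ g_mono _]] := (f'_quot, Hgq).
have [l [r [lt_Nl r_quot r_fst]]] :=
  Hfr.2 N (pullback f' g) (pb_fst f' g) (pb_fst_quot f' g f'_mono Hgq).
exists (fun x => pb_snd f' g (r (sval x l))); split.
- by move=> x; exists l => y /(_ l (leqnn l)) ->.
- exact: quotient_map_comp (invlim_proj_quot Hseq l)
    (quotient_map_comp r_quot (pb_snd_quot f' g f'_quot g_mono)).
- by move=> x; rewrite -pb_comm r_fst f_factor (invlim_proj Hseq x lt_Nl).
Qed.
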